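(* Let $p$ and $s$ be distinct odd primes and $n$ a positive integer with $p\equiv1\pmod n$. Let $g$ be a primitive root modulo $p$, $\zeta$ a primitive $p$-th root of unity in $\overline{\mathbb{F}}_s$, and $G(p,n)=\langle a,b\mid a^p=1=b^{(p-1)/n},\ b^{-1}ab=a^{g^n}\rangle$. Let $\rho:\langle a\rangle\to\overline{\mathbb{F}}_s^*$ be given by $\rho(a)=\zeta$. Then the induced representation $\rho^{G(p,n)}$ is realizable over $\mathbb{F}_s$ if and only if $s$ is an $n$-th power in $\mathbb{F}_p$ (i.e. $s\equiv y^n\pmod p$ for some integer $y$).
   Context: A representation over $\overline{\mathbb{F}}_s$ is realizable over $\mathbb{F}_s$ if it is equivalent (over $\overline{\mathbb{F}}_s$) to a matrix representation with all entries in $\mathbb{F}_s$. Concretely, with $N=(p-1)/n$, $\rho^{G(p,n)}$ acts on a space with basis $e_0,\dots,e_{N-1}$ by $ae_i=\zeta^{g^{ni}}e_i$, $be_i=e_{i+1}$ (indices modulo $N$). *)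

From HB Require Import structures.
From mathcomp Require Import all_boot all_order all_algebra all_field.
Set Implicit Arguments. Unset Strict Implicit. Unset Printing Implicit Defensive.
Import GRing.Theory.
Local Open Scope ring_scope.

(* Dimension N = (p-1)/n of the induced representation. *)
Definition indDim (p n : nat) : nat := (p.-1 %/ n)%N.

(* Image of a under rho^{G(p,n)}: e_i |-> zeta^(g^(n i)) e_i (diagonal). *)
Definition indA (F : fieldType) (p n g : nat) (zeta : F) : 'M[F]_(indDim p n) :=
  diag_mx (\row_(i < indDim p n) zeta ^+ (g ^ (n * i))).

(* Image of b: e_i |-> e_{i+1}, indices mod N (row-vector convention:
   e_i *m indB = e_{i+1}). *)
Definition indB (F : fieldType) (p n : nat) : 'M[F]_(indDim p n) :=
  \matrix_(i, j) ((nat_of_ord j == (i.+1 %% indDim p n)%N)%:R).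

(* x lies in the prime subfield F_s of F (image of the integers). *)
Definition in_prime_field (F : fieldType) (x : F) : Prop :=
  exists k : nat, x = k%:R.

Definition mx_over_prime_field (F : fieldType) (m : nat) (M : 'M[F]_m) : Prop :=
  forall i j, in_prime_field (M i j).

Definition realizable_over_prime_field (F : fieldType) (m : nat)
  (A B : 'M[F]_m) : Prop :=
  exists P : 'M[F]_m, P \in unitmx /\
    mx_over_prime_field (P *m A *m invmx P) /\
    mx_over_prime_field (P *m B *m invmx P).

From HB Require Import structures.
From mathcomp Require Import all_boot all_order all_algebra all_field all_fingroup.
Set Implicit Arguments. Unset Strict Implicit. Unset Printing Implicit Defensive.
Import GRing.Theory.
Local Open Scope ring_scope.

(* The prime field of F is the fixed field of the Frobenius x |-> x^s, and
   rho^G(p,n)(a) is diagonal with the distinct eigenvalues zeta^(g^(n i)).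
   If the representation is conjugate to one over the prime field, it is
   conjugate to its Frobenius twist, so zeta^s is again an eigenvalue and
   s = g^(n j) mod p.  Conversely, if s = g^(n k) mod p, the Frobenius shifts
   the eigenvalues cyclically by k; conjugating by the Vandermonde matrix of
   the eigenvalues turns this shift into a permutation matrix commuting with
   the cyclic matrix of b, which makes both conjugates Frobenius-fixed. *)

Lemma unitmx_row_neq0 (F : fieldType) m (Q : 'M[F]_m) i :
  Q \in unitmx -> exists j, Q i j != 0.
Proof.
move=> uQ; apply/existsP; apply: contraT; rewrite negb_exists => /forallP Q0.
move/(congr1 (fun A : 'M[F]_m => A i i)): (mulmxV uQ).
rewrite !mxE eqxx big1 => [/eqP|j _]; first by rewrite eq_sym oner_eq0.
by rewrite (eqP (negPn (Q0 j))) mul0r.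
Qed.

Lemma intertwined_diag_entry (F : fieldType) m (d e : 'rV[F]_m) (Q : 'M[F]_m) :
  Q \in unitmx -> diag_mx e *m Q = Q *m diag_mx d ->
  forall i, exists j, e 0 i = d 0 j.
Proof.
move=> uQ eQ i; have [j Qij] := unitmx_row_neq0 i uQ; exists j.
move/matrixP/(_ i j): eQ; rewrite mul_diag_mx mul_mx_diag !mxE mulrC.
exact: mulfI.
Qed.

Lemma map_mx_conj_fixed (F : fieldType) (f : {rmorphism F -> F}) m
    (P Pi M : 'M[F]_m) :
  P \in unitmx -> map_mx f P = P *m Pi -> Pi *m map_mx f M = M *m Pi ->
  map_mx f (P *m M *m invmx P) = P *m M *m invmx P.
Proof.
move=> uP eP eM; have uPPi : P *m Pi \in unitmx by rewrite -eP map_unitmx.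
rewrite -[LHS](mulmxK uPPi) -[RHS](mulmxK uPPi); congr (_ *m _).
rewrite !map_mxM map_invmx -eP mulmxKV ?map_unitmx // eP.
by rewrite -mulmxA eM !mulmxA mulmxKV.
Qed.

Lemma Vandermonde_unitmx (F : fieldType) m (a : 'rV[F]_m) :
  injective (a 0) -> Vandermonde m a \in unitmx.
Proof.
move=> inj_a; rewrite unitmxE det_Vandermonde unitfE.
apply/prodf_neq0 => i _; apply/prodf_neq0 => j ij.
by rewrite subr_eq0 (inj_eq inj_a) -val_eqE gtn_eqF.
Qed.

Lemma map_Vandermonde_perm (F : fieldType) (f : {rmorphism F -> F}) k m
    (a : 'rV[F]_m) (sig : {perm 'I_m}) :
  (forall j, f (a 0 j) = a 0 (sig j)) ->
  map_mx f (Vandermonde k a) = Vandermonde k a *m perm_mx sig^-1.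
Proof.
move=> fa; rewrite -col_permE.
by apply/matrixP => i j; rewrite !mxE rmorphXn fa.
Qed.

Lemma perm_mx_diag (R : pzSemiRingType) m (sig : {perm 'I_m}) (d : 'rV[R]_m) :
  perm_mx sig *m diag_mx d = diag_mx (col_perm sig d) *m perm_mx sig.
Proof.
apply/matrixP => i j; rewrite mul_diag_mx mul_mx_diag !mxE.
by case: eqP => [<-|_]; rewrite ?mulr1 ?mul1r ?mulr0n ?mulr0 ?mul0r.
Qed.

Lemma ordS_permX m (i : 'I_m) k :
  val ((perm (@ordS_inj m) ^+ k)%g i) = ((i + k) %% m)%N.
Proof.
rewrite permX; elim: k => [|k IHk] /=; first by rewrite addn0 modn_small.
by rewrite permE /= IHk -addn1 modnDml addn1 addnS.
Qed.

Section PrimeField.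

Variables (F : fieldType) (s : nat).
Hypothesis chF : s \in [pchar F].

Local Notation fr := (pFrobenius_aut chF).

Lemma natr_inj_pchar k l : (k < s)%N -> (l < s)%N -> (k%:R : F) = l%:R -> k = l.
Proof.
wlog kl : k l / (k <= l)%N.
  move=> IH ks ls E; case: (leqP k l) => [kl|/ltnW lk]; first exact: IH.
  exact/esym/IH.
move=> _ ls E; apply/eqP; rewrite eqn_leq kl /=.
have : (s %| l - k)%N by rewrite (dvdn_pcharf chF) natrB // E subrr.
case: (posnP (l - k)) => [/eqP|lk0]; first by rewrite subn_eq0.
move/(dvdn_leq lk0); rewrite leqNgt.
by rewrite (leq_ltn_trans (leq_subr k l) ls).
Qed.

(* The s elements k%:R, k < s, are distinct roots of X^s - X, which has no
   other root. *)
Lemma pFrobenius_fixed_prime_field (x : F) : x ^+ s = x -> in_prime_field x.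
Proof.
move=> xs; pose rs := [seq (k%:R : F) | k <- iota 0 s].
have [/mapP[k _ ->]|rs'x] := boolP (x \in rs); first by exists k.
pose q : {poly F} := 'X^s - 'X.
have s_gt1 : (1 < s)%N by apply/prime_gt1/(pcharf_prime chF).
have szq : size q = s.+1.
  by rewrite size_polyDl ?size_polyXn ?size_polyN ?size_polyX.
have q_neq0 : q != 0 by rewrite -size_poly_eq0 szq.
have roots_q : all (root q) (x :: rs).
  rewrite /= {1}/root /q !hornerE xs subrr eqxx /=.
  apply/allP => _ /mapP[k _ ->]; rewrite /root !hornerE.
  have := pFrobenius_aut_nat chF k.
  by rewrite pFrobenius_autE => ->; rewrite subrr.
have uniq_xrs : uniq (x :: rs).
  rewrite /= rs'x map_inj_in_uniq ?iota_uniq // => k l.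
  by rewrite !mem_iota !add0n; exact: natr_inj_pchar.
have := max_poly_roots q_neq0 roots_q uniq_xrs.
by rewrite szq /= size_map size_iota ltnn.
Qed.

Lemma map_pFrobenius_prime_field m (M : 'M[F]_m) :
  mx_over_prime_field M -> map_mx fr M = M.
Proof.
by move=> FM; apply/matrixP => i j; rewrite mxE; have [k ->] := FM i j;
  rewrite pFrobenius_aut_nat.
Qed.

Lemma realizable_diag_pFrobenius_entry m (a : 'rV[F]_m) (P : 'M[F]_m) :
  P \in unitmx -> mx_over_prime_field (P *m diag_mx a *m invmx P) ->
  forall i, exists j, a 0 i ^+ s = a 0 j.
Proof.
move=> uP /map_pFrobenius_prime_field fixPD i.
have ufP : map_mx fr P \in unitmx by rewrite map_unitmx.
pose Q := invmx (map_mx fr P) *m P.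
have uQ : Q \in unitmx by rewrite unitmx_mul unitmx_inv ufP.
have [|j aij] := @intertwined_diag_entry _ _ a (map_mx fr a) Q uQ _ i.
  have E : map_mx fr P *m diag_mx (map_mx fr a) *m invmx (map_mx fr P)
           = P *m diag_mx a *m invmx P.
    by rewrite -map_diag_mx -map_invmx -!map_mxM.
  rewrite /Q -[RHS](mulmxKV uP) -(mulmxA (invmx _) P) -(mulmxA (invmx _)) -E.
  by rewrite !mulmxA mulVmx // mul1mx.
by exists j; rewrite -aij mxE pFrobenius_autE.
Qed.

Lemma realizable_diag_perm m (a : 'rV[F]_m) (sig tau : {perm 'I_m}) :
  injective (a 0) -> (forall j, a 0 j ^+ s = a 0 (sig j)) ->
  commute tau sig ->
  realizable_over_prime_field (diag_mx a) (perm_mx tau).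
Proof.
move=> inj_a a_s tau_sig.
pose P := Vandermonde m a; pose Pi : 'M[F]_m := perm_mx sig^-1.
have uP : P \in unitmx by exact: Vandermonde_unitmx.
have fr_a j : fr (a 0 j) = a 0 (sig j) by rewrite -a_s; apply: pFrobenius_autE.
have eP : map_mx fr P = P *m Pi by apply: map_Vandermonde_perm.
have over_fixed M : Pi *m map_mx fr M = M *m Pi ->
    mx_over_prime_field (P *m M *m invmx P).
  move=> eM i j; apply: pFrobenius_fixed_prime_field.
  by move/matrixP/(_ i j): (map_mx_conj_fixed uP eP eM); rewrite mxE.
exists P; split=> //; split; apply: over_fixed.
  rewrite map_diag_mx perm_mx_diag; congr (diag_mx _ *m _).
  apply/matrixP => i j; rewrite !mxE ord1 -[in RHS](permKV sig j).
  exact: fr_a.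
have tau_prime : mx_over_prime_field (perm_mx tau : 'M[F]_m).
  by move=> i j; rewrite !mxE; exists (tau i == j).
by rewrite map_pFrobenius_prime_field // /Pi -!perm_mxM (commuteV tau_sig).
Qed.

End PrimeField.

Lemma eqFp_nat p a b : prime p -> (a%:R == b%:R :> 'F_p) = (a == b %[mod p]).
Proof. by move=> pr_p; rewrite -val_eqE /= !val_Fp_nat. Qed.

Section InducedRepresentation.

Variables (p n g : nat) (F : fieldType) (zeta : F).
Hypotheses (pr_p : prime p) (n_gt0 : (0 < n)%N) (n_dvd : (n %| p.-1)%N).
Hypothesis prim_g : (p.-1).-primitive_root (g%:R : 'F_p).
Hypothesis prim_zeta : p.-primitive_root zeta.

Local Notation N := (indDim p n).
Local Notation G := (g%:R : 'F_p).
Let a : 'rV[F]_N := \row_(i < N) zeta ^+ (g ^ (n * i)).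

Lemma muln_indDim : (n * N)%N = p.-1.
Proof. by rewrite mulnC divnK. Qed.

Lemma indDim_gt0 : (0 < N)%N.
Proof.
have : (0 < p.-1)%N by rewrite -subn1 subn_gt0 prime_gt1.
by rewrite -muln_indDim muln_gt0 => /andP[].
Qed.

Lemma indA_entry_inj : injective (a 0).
Proof.
move=> i j /eqP; rewrite !mxE (eq_prim_root_expr prim_zeta) -eqFp_nat //.
rewrite !natrX (eq_prim_root_expr prim_g) -muln_indDim -!muln_modr.
rewrite eqn_pmul2l //.
by rewrite !modn_small // => /eqP/val_inj.
Qed.

Lemma indA_entry_shift s k : (s%:R : 'F_p) = G ^+ (n * k) ->
  forall i, a 0 i ^+ s = a 0 ((perm (@ordS_inj N) ^+ k)%g i).
Proof.
move=> sG i; rewrite !mxE -exprM; apply/eqP.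
rewrite (eq_prim_root_expr prim_zeta) -eqFp_nat // natrM !natrX ordS_permX sG.
rewrite -exprD -mulnDr (eq_prim_root_expr prim_g).
by rewrite muln_modr muln_indDim modn_mod.
Qed.

Lemma indB_perm_mx : indB F p n = perm_mx (perm (@ordS_inj N)).
Proof. by apply/matrixP => i j; rewrite !mxE permE eq_sym. Qed.

Lemma Fp_nth_power_exp s y : ~~ (p %| s)%N -> s = y ^ n %[mod p] ->
  exists k, (s%:R : 'F_p) = G ^+ (n * k).
Proof.
move=> p'_s sy; have ys : (s%:R : 'F_p) = y%:R ^+ n.
  by rewrite -natrX; apply/eqP; rewrite eqFp_nat //; apply/eqP.
have y_neq0 : (y%:R : 'F_p) != 0.
  apply: contraNneq p'_s => y0; rewrite (dvdn_pcharf (pchar_Fp pr_p)).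
  by rewrite ys y0 expr0n gtn_eqF.
have yp : (y%:R : 'F_p) ^+ p.-1 = 1.
  apply: (mulfI y_neq0); rewrite mulr1 -exprS prednK ?prime_gt0 //.
  by rewrite -[in X in _ ^+ X](card_Fp pr_p) expf_card.
have [j yj] := prim_rootP prim_g yp.
by exists j; rewrite ys yj -exprM mulnC.
Qed.

Variable s : nat.
Hypothesis chF : s \in [pchar F].

Lemma realizable_ind_nth_power :
  realizable_over_prime_field (indA p n g zeta) (indB F p n) ->
  exists y, s = y ^ n %[mod p].
Proof.
case=> P [uP [PA _]].
have [j /eqP] :=
  realizable_diag_pFrobenius_entry chF uP PA (Ordinal indDim_gt0).
rewrite !mxE muln0 expn0 expr1 (eq_prim_root_expr prim_zeta) => /eqP sj.
by exists (g ^ j)%N; rewrite -expnM mulnC.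
Qed.

Lemma nth_power_realizable_ind : ~~ (p %| s)%N ->
  (exists y, s = y ^ n %[mod p]) ->
  realizable_over_prime_field (indA p n g zeta) (indB F p n).
Proof.
move=> p'_s [y /(Fp_nth_power_exp p'_s)[k sG]]; rewrite indB_perm_mx.
apply: (realizable_diag_perm chF indA_entry_inj (indA_entry_shift sG)).
exact/commuteX/commute_refl.
Qed.

End InducedRepresentation.

Theorem mainTheorem11 (p s n g : nat) (F : closedFieldType) (zeta : F) :
  prime p -> prime s -> odd p -> odd s -> p != s ->
  (0 < n)%N -> p = 1 %[mod n] ->
  (p.-1).-primitive_root (g%:R : 'F_p) ->
  s \in [pchar F] ->
  p.-primitive_root zeta ->
  realizable_over_prime_field (indA p n g zeta) (indB F p n) <->
  (exists y : nat, s = y ^ n %[mod p]).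
Proof.
move=> pr_p pr_s _ _ p_neq_s n_gt0 p_mod_n prim_g chF prim_zeta.
have n_dvd : (n %| p.-1)%N by rewrite -subn1 -eqn_mod_dvd ?prime_gt0 // p_mod_n.
have p'_s : ~~ (p %| s)%N by rewrite dvdn_prime2.
split; first exact: realizable_ind_nth_power.
exact: nth_power_realizable_ind.
Qed.
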